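(* Let $r\ge 2$, $\pi\in\Pi_1(\{1,\dots,r\})$ and $c\in\mathcal{C}(\pi)$, and let $T=\psi_\pi(c)$ be the tree produced by the construction described in the context. Then $T\in\mathcal{E}(\pi)$ and $\kappa(T)=\omega(c,\pi)$.
   Context: Trees: an unordered increasing tree is a rooted tree on distinct positive integers, sons unordered, each son larger than its father. $\sigma_i(T)$ is the number of sons of $i$; $\kappa(T)=\prod_{i\in V(T)}x_i^{\sigma_i(T)}$ (with $x_i$ formal variables). $\Pi_1(\{1,\dots,r\})$ is the set of set partitions of $\{1,\dots,r\}$ having $\{1\}$ as a block; for such $\pi$ with $k$ blocks, index them $\pi_1,\dots,\pi_k$ so that $\mu_i=\max\pi_i$ satisfy $1=\mu_1<\mu_2<\dots<\mu_k=r$. $\mathcal{E}(\pi)$ is the set of unordered increasing trees on $\{1,\dots,r\}$ in which, for every two elements $i<j$ of the same block of $\pi$, $i$ is an ancestor of $j$. $\mathcal{C}(\pi)=\{(c_2,\dots,c_{k-1}):1\le c_i\le \mu_i\}$ (only the empty list if $k=2$), and $\omega(c,\pi)=\frac{x_{c_2}\cdots x_{c_{k-1}}}{x_{\mu_2}\cdots x_{\mu_k}}\prod_{i=1}^r x_i$. $v$-decomposition: for a vertex $v$ of an unordered increasing tree $T$ with chain $a_1<\dots<a_k=v$ from the root to $v$, removing the chain edges gives components $T^{(a_i)}$ rooted at $a_i$. Splice: for unordered increasing trees $T_1,T_2$ with disjoint vertex-sets and $v_1\in V(T_1)$, $v_2\in V(T_2)$, $v_1>v_2$, $\mathrm{spl}(T_1,v_1;T_2,v_2)$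 is the tree on $V(T_1)\cup V(T_2)$ obtained by merging the root-to-$v_1$ chain of $T_1$ and the root-to-$v_2$ chain of $T_2$ into one increasing chain (root = smallest element, ending at $v_1$) and attaching at each chain vertex its component from the $v_1$-decomposition of $T_1$ or the $v_2$-decomposition of $T_2$. Construction of $\psi_\pi(c)$: Stage 1: let $\tau_\ell$ be the increasing chain on the elements of $\pi_\ell$ ($\ell=1,\dots,k$), and set $\nu=1$. For $i=2,\dots,k-1$ (Stage $i$): if $c_i$ is a vertex of $\tau_1$ or $\tau_i$, replace $\tau_1$ by $\mathrm{spl}(\tau_i,\mu_i;\tau_1,\nu)$, discard $\tau_i$, and set $\nu=c_i$; otherwise $c_i$ is a vertex of $\tau_j$ for some $j>i$, and then replace $\tau_j$ by $\mathrm{spl}(\tau_i,\mu_i;\tau_j,c_i)$ and discard $\tau_i$. Finally (Stage $k$), $\psi_\pi(c)=\mathrm{spl}(\tau_k,\mu_k;\tau_1,\nu)$. (All splices are well defined.) *)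

From HB Require Import structures.
From mathcomp Require Import all_boot all_order all_algebra.
From mathcomp Require Import fraction.
From mathcomp Require Import mpoly.
Set Implicit Arguments. Unset Strict Implicit. Unset Printing Implicit Defensive.
Import Order.TTheory GRing.Theory Num.Theory.

(* Unordered increasing trees, encoded by (vertex list, parent map).   *)
(* Vertices are positive naturals; the root has parent 0 ("no parent"). *)
(* The parent map is only meaningful on the vertex list.               *)
Definition tree := (seq nat * (nat -> nat))%type.
Definition verts (T : tree) : seq nat := T.1.
Definition par (T : tree) : nat -> nat := T.2.

Definition root (T : tree) : nat := foldr minn (head 0 (verts T)) (verts T).

Definition is_inc_tree (T : tree) : Prop :=
  [/\ uniq (verts T), verts T != [::], all (fun v => 0 < v) (verts T) &
      forall v, v \in verts T ->
        if v == root T then par T v = 0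
        else (par T v \in verts T) /\ (par T v < v)].

Fixpoint anc_fuel (p : nat -> nat) (n v : nat) : seq nat :=
  if n is n'.+1 then (if v == 0 then [::] else v :: anc_fuel p n' (p v))
  else [::].
Definition chain (T : tree) (v : nat) : seq nat := anc_fuel (par T) v.+1 v.
Definition is_ancestor (T : tree) (i j : nat) : bool := i \in chain T j.

Definition sons (T : tree) (i : nat) : nat :=
  count (fun v => (v != root T) && (par T v == i)) (verts T).

Definition chain_tree (b : seq nat) : tree :=
  (b, fun u => \max_(w <- b | w < u) w).

(* splice spl(T1,v1;T2,v2): the two root-to-v chains are merged into a single
   increasing chain; every other vertex keeps its father (i.e. its component
   of the v-decomposition stays attached at the same chain vertex). *)
Definition spl (T1 : tree) (v1 : nat) (T2 : tree) (v2 : nat) : tree :=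
  let C := chain T1 v1 ++ chain T2 v2 in
  (verts T1 ++ verts T2,
   fun u => if u \in C then \max_(w <- C | w < u) w
            else if u \in verts T1 then par T1 u else par T2 u).

(* Set partitions of {1,...,r}, as partitions of the subset {1..r} of   *)
(* the finite type 'I_r.+1                                             *)
Definition posI (r : nat) : {set 'I_r.+1} := [set i : 'I_r.+1 | 0 < i].

Definition Pi1 (r : nat) (P : {set {set 'I_r.+1}}) : bool :=
  partition P (posI r) && ([set (inord 1 : 'I_r.+1)] \in P).

Definition bmax (r : nat) (B : {set 'I_r.+1}) : nat := \max_(x in B) (x : nat).
Definition mus (r : nat) (P : {set {set 'I_r.+1}}) : seq nat :=
  sort leq [seq bmax B | B <- enum P].
Definition nbl (r : nat) (P : {set {set 'I_r.+1}}) : nat := #|P|.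
Definition mu (r : nat) (P : {set {set 'I_r.+1}}) (i : nat) : nat :=
  nth 0 (mus P) i.-1.
Definition block (r : nat) (P : {set {set 'I_r.+1}}) (i : nat) : seq nat :=
  sort leq [seq nat_of_ord x | x <- enum (pblock P (inord (mu P i)))].

(* c = (c_2, ..., c_{k-1}) \in C(pi), stored as the list [c_2; ...; c_{k-1}] *)
Definition cc (c : seq nat) (i : nat) : nat := nth 0 c (i - 2).
Definition in_C (r : nat) (P : {set {set 'I_r.+1}}) (c : seq nat) : Prop :=
  size c = (nbl P - 2)%N /\
  forall i, 2 <= i <= (nbl P).-1 -> 1 <= cc c i <= mu P i.

Definition in_E (r : nat) (P : {set {set 'I_r.+1}}) (T : tree) : Prop :=
  [/\ is_inc_tree T,
      (forall x, (x \in verts T) = (1 <= x <= r)) &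
      forall B, B \in P -> forall x y : 'I_r.+1, x \in B -> y \in B ->
        (x < y)%N -> is_ancestor T x y].

(* State: the family of trees tau_l (l = 1..k), and nu.                 *)
Definition upd (F : nat -> tree) (j : nat) (t : tree) : nat -> tree :=
  fun l => if l == j then t else F l.

Definition stage (r : nat) (P : {set {set 'I_r.+1}}) (c : seq nat)
    (st : (nat -> tree) * nat) (i : nat) : (nat -> tree) * nat :=
  let (F, nu) := st in
  let ci := cc c i in
  if (ci \in verts (F 1%N)) || (ci \in verts (F i)) then
    (upd F 1 (spl (F i) (mu P i) (F 1%N) nu), ci)
  else
    let j := head 0 [seq j <- iota i.+1 (nbl P - i) | ci \in verts (F j)] in
    (upd F j (spl (F i) (mu P i) (F j) ci), nu).

Definition psi (r : nat) (P : {set {set 'I_r.+1}}) (c : seq nat) : tree :=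
  let st0 := ((fun l => chain_tree (block P l)), 1%N) in
  let st := foldl (stage P c) st0 (iota 2 (nbl P - 2)) in
  spl (st.1 (nbl P)) (mu P (nbl P)) (st.1 1%N) st.2.

(* kappa and omega, as elements of the field of rational functions      *)
(* Q(x_0, ..., x_r); x_i is the variable 'X_i                           *)
Definition ratf (r : nat) := {fraction {mpoly rat[r.+1]}}.
Definition xv (r : nat) (i : nat) : ratf r := @FracField.tofrac _ ('X_(inord i : 'I_r.+1)).

Definition kappa (r : nat) (T : tree) : ratf r :=
  (\prod_(i <- verts T) xv r i ^+ sons T i)%R.

Definition omega (r : nat) (P : {set {set 'I_r.+1}}) (c : seq nat) : ratf r :=
  ((\prod_(i <- c) xv r i) / (\prod_(m <- behead (mus P)) xv r m)
  * \prod_(1 <= i < r.+1) xv r i)%R.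

From Pilot Require Import Defs.
From HB Require Import structures.
From mathcomp Require Import all_boot all_order all_algebra.
From mathcomp Require Import fraction mpoly.
From mathcomp Require Import zify ring.
Set Implicit Arguments. Unset Strict Implicit. Unset Printing Implicit Defensive.
Import GRing.Theory.

(* A splice spl(T1,v1;T2,v2) merges the two root chains into one increasing
   chain and keeps every other father.  Hence it is again an unordered
   increasing tree, every ancestor relation of T1 and T2 survives in it, and,
   the fathers on the merged chain being its vertices other than v1, we get
   kappa(spl) = x_{v2} kappa(T1) kappa(T2).
   The chains on the blocks of pi have kappa's multiplying to
   x_1...x_r / (x_{mu_1}...x_{mu_k}).  Each stage splices two of the current
   trees, at nu or at c_i; keeping the pending factor x_nu aside, stage i
   contributes exactly x_{c_i}, and the final splice releases x_nu, which
   gives omega(c,pi).  Throughout, the current trees partition {1,...,r} and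
   already contain every pair of a block as ancestor and descendant, so the
   final tree lies in E(pi). *)

Local Notation troot := Defs.root.

(** * Increasing trees and their chains *)

(* The father of [u] on the chain [s] in [chain_tree] and [spl]. *)

Definition max_below (s : seq nat) (u : nat) : nat := \max_(w <- s | w < u) w.

Lemma max_below_ge s u w : w \in s -> w < u -> w <= max_below s u.
Proof. exact: (leq_bigmax_seq (F := id) (P := fun w => w < u)). Qed.

Lemma max_belowP s u :
  max_below s u = 0 \/ max_below s u \in s /\ max_below s u < u.
Proof.
rewrite /max_below big_seq_cond.
apply: (big_ind (fun m => m = 0 \/ m \in s /\ m < u)); first by left.
  by move=> m1 m2 m1P m2P; rewrite /maxn; case: ifP.
by move=> w /andP[ws wu]; right.
Qed.

Lemma max_below_eq0 s u : {in s, forall w, u <= w} -> max_below s u = 0.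
Proof.
move=> s_ge; rewrite /max_below big1_seq // => w /andP[wu ws].
by have := s_ge w ws; rewrite leqNgt wu.
Qed.

Lemma max_below_mem s u m : all (fun w => 0 < w) s -> m \in s -> m < u ->
  max_below s u \in s /\ max_below s u < u.
Proof.
move=> /allP s_pos ms mu; case: (max_belowP s u) => // m0.
by have := max_below_ge ms mu; rewrite m0 leqn0 => /eqP m_0; move: (s_pos m ms); rewrite m_0.
Qed.

Lemma mem_anc_fuel_max_below (p : nat -> nat) (s : seq nat) :
  all (fun w => 0 < w) s -> {in s, forall u, p u = max_below s u} ->
  forall n c x, c \in s -> c < n -> (x \in anc_fuel p n c) = (x \in s) && (x <= c).
Proof.
move=> /allP s_pos p_s; elim=> // n IH c x cs cn /=.
rewrite eqn0Ngt s_pos //= in_cons p_s //.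
case: (max_belowP s c) => [m0 | [ms mc]].
  rewrite m0 (_ : anc_fuel p n 0 = [::]) ?orbF; last by case: n {IH cn}.
  apply/eqP/andP => [-> | [xs xc]]; first by rewrite cs.
  apply/eqP; rewrite eqn_leq xc leqNgt; apply/negP => x_lt.
  by move: (max_below_ge xs x_lt) (s_pos x xs); rewrite m0 leqn0 => /eqP ->.
rewrite IH //; last exact: leq_trans mc _.
case: (eqVneq x c) => [-> | xc] /=; first by rewrite cs leqnn.
case xs: (x \in s) => //=; apply/idP/idP => [x_le | x_le].
  exact: ltnW (leq_ltn_trans x_le mc).
by apply: max_below_ge => //; rewrite ltn_neqAle xc.
Qed.

Lemma root_min (T : tree) v : v \in verts T -> troot T <= v.
Proof.
rewrite /troot; elim: (verts T) (head 0 (verts T)) => //= a s IH d.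
by rewrite in_cons => /orP[/eqP -> | vs]; rewrite geq_min ?leqnn ?IH ?orbT.
Qed.

Lemma root_mem (T : tree) : verts T != [::] -> troot T \in verts T.
Proof.
have foldr_min_mem d s : foldr minn d s \in d :: s.
  elim: s => /= [|a s IH]; first exact: mem_head.
  rewrite /minn; case: ifP => _; first by rewrite !inE eqxx orbT.
  by move: IH; rewrite !inE => /orP[-> | ->]; rewrite ?orbT.
rewrite /troot; case: (verts T) => // a s _.
by have := foldr_min_mem a (a :: s); rewrite in_cons => /orP[/eqP -> | ->]; rewrite ?mem_head.
Qed.

Section IncreasingTree.
Variable T : tree.
Hypothesis T_inc : is_inc_tree T.

Lemma inc_tree_pos v : v \in verts T -> 0 < v.
Proof. by case: T_inc => _ _ /allP T_pos _; apply: T_pos. Qed.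

Lemma inc_tree_par v : v \in verts T -> v != troot T ->
  par T v \in verts T /\ par T v < v.
Proof. by case: T_inc => _ _ _ par_T vT /negbTE vr; have := par_T v vT; rewrite vr. Qed.

Lemma inc_tree_root_mem : troot T \in verts T.
Proof. by case: T_inc => _ T_ne _ _; apply: root_mem. Qed.

Lemma inc_tree_par_root : par T (troot T) = 0.
Proof. by case: T_inc => _ _ _ /(_ _ inc_tree_root_mem); rewrite eqxx. Qed.

Lemma anc_fuel_stable n m v : v \in verts T -> v < n -> v < m ->
  anc_fuel (par T) n v = anc_fuel (par T) m v.
Proof.
elim: n m v => // n IH [|m] // v vT vn vm /=.
rewrite eqn0Ngt inc_tree_pos //=; congr (_ :: _).
case: (eqVneq v (troot T)) => [-> | vr].
  by rewrite inc_tree_par_root; case: n {IH vn}; case: m {vm}.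
have [pT pv] := inc_tree_par vT vr.
by apply: IH => //; apply: leq_trans pv _.
Qed.

Lemma chain_unfold v : v \in verts T ->
  chain T v = v :: (if v == troot T then [::] else chain T (par T v)).
Proof.
move=> vT; rewrite {1}/chain /= eqn0Ngt inc_tree_pos //=; congr (_ :: _).
case: (eqVneq v (troot T)) => [-> | vr].
  by rewrite inc_tree_par_root; case: (troot T).
have [pT pv] := inc_tree_par vT vr.
exact: anc_fuel_stable.
Qed.

Lemma chain_self v : v \in verts T -> v \in chain T v.
Proof. by move/chain_unfold ->; rewrite mem_head. Qed.

Lemma mem_chain v x : v \in verts T -> x \in chain T v -> (x \in verts T) && (x <= v).
Proof.
elim/ltn_ind: v => v IH vT; rewrite chain_unfold // in_cons.
case/orP => [/eqP -> | ]; first by rewrite vT leqnn.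
case: ifP => // /negbT vr x_ch; have [pT pv] := inc_tree_par vT vr.
by case/andP: (IH _ pv pT x_ch) => -> x_le; apply: leq_trans x_le (ltnW pv).
Qed.

Lemma root_mem_chain v : v \in verts T -> troot T \in chain T v.
Proof.
elim/ltn_ind: v => v IH vT; rewrite chain_unfold // in_cons.
case: ifP => [/eqP -> | /negbT vr]; first by rewrite eqxx.
by have [pT pv] := inc_tree_par vT vr; rewrite IH ?orbT.
Qed.

Lemma chain_trans v b a : v \in verts T ->
  b \in chain T v -> a \in chain T b -> a \in chain T v.
Proof.
elim/ltn_ind: v b => v IH b vT; rewrite chain_unfold // !in_cons.
case/orP => [/eqP -> | ]; first by rewrite chain_unfold // in_cons.
case: ifP => // /negbT vr b_ch a_ch; have [pT pv] := inc_tree_par vT vr.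
by rewrite (IH _ pv b pT b_ch a_ch) orbT.
Qed.

Lemma chain_uniq v : v \in verts T -> uniq (chain T v).
Proof.
elim/ltn_ind: v => v IH vT; rewrite chain_unfold //.
case: ifP => // /negbT vr; have [pT pv] := inc_tree_par vT vr.
rewrite /= IH // andbT; apply/negP => /(mem_chain pT) /andP[_ v_le].
by move: (leq_trans pv v_le); rewrite ltnn.
Qed.

Lemma chain_parent_prod (R : comPzSemiRingType) (f : nat -> R) v : v \in verts T ->
  (\prod_(x <- chain T v | x != troot T) f (par T x) = \prod_(x <- chain T v | x != v) f x)%R.
Proof.
elim/ltn_ind: v => v IH vT; rewrite chain_unfold //.
case: ifP => [/eqP -> | /negbT vr]; first by rewrite !big_cons eqxx !big_nil.
have [pT pv] := inc_tree_par vT vr.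
rewrite !big_cons vr eqxx IH // -(bigD1_seq _ (chain_self pT) (chain_uniq pT)).
rewrite big_seq_cond [RHS]big_seq_cond; apply: eq_bigl => x.
case x_ch: (x \in chain T _) => //=; case/andP: (mem_chain pT x_ch) => _ x_le.
by apply/esym/eqP => x_v; move: (leq_ltn_trans x_le pv); rewrite x_v ltnn.
Qed.

End IncreasingTree.

(** * Splicing *)

Lemma verts_spl T1 v1 T2 v2 : verts (spl T1 v1 T2 v2) = verts T1 ++ verts T2.
Proof. by []. Qed.

(* Ancestry in [T] survives when the chain of [T] through [v] is rearranged
   into [s] and the rest of [T] is attached to [S] unchanged. *)
Lemma chain_graft (T S : tree) (s : seq nat) v :
  is_inc_tree T -> is_inc_tree S -> v \in verts T -> {subset verts T <= verts S} ->
  all (fun w => 0 < w) s -> {in s, forall u, par S u = max_below s u} ->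
  {in verts T, forall x, (x \in s) = (x \in chain T v)} ->
  {in verts T, forall u, u \notin s -> par S u = par T u} -> troot S \in s ->
  forall b a, b \in verts T -> a \in chain T b -> a \in chain S b.
Proof.
move=> T_inc S_inc vT TS s_pos par_s s_chain par_out rS.
elim/ltn_ind => b IH a bT a_ch; case bs: (b \in s).
  have a_chv := chain_trans T_inc vT (etrans (esym (s_chain b bT)) bs) a_ch.
  case/andP: (mem_chain T_inc bT a_ch) => aT ab.
  by rewrite /chain (mem_anc_fuel_max_below s_pos par_s) // ab s_chain // a_chv.
have bT_root : b != troot T.
  by apply: contraFneq bs => ->; rewrite s_chain ?inc_tree_root_mem ?root_mem_chain.
have bS_root : b != troot S by apply: contraFneq bs => ->.
move: a_ch; rewrite (chain_unfold T_inc bT) (chain_unfold S_inc (TS _ bT)).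
rewrite (negbTE bT_root) (negbTE bS_root) !in_cons => /orP[-> // | a_ch].
have [pT pb] := inc_tree_par T_inc bT bT_root.
by rewrite par_out ?bs // IH ?orbT.
Qed.

Definition parent_prod (R : comPzSemiRingType) (f : nat -> R) (T : tree) : R :=
  (\prod_(v <- verts T | v != troot T) f (par T v))%R.

Lemma prod_pow_sons (R : comPzSemiRingType) (f : nat -> R) (T : tree) : is_inc_tree T ->
  (\prod_(i <- verts T) f i ^+ sons T i)%R = parent_prod f T.
Proof.
move=> T_inc.
have sons_prod i : (f i ^+ sons T i =
    \prod_(v <- verts T) if (v != troot T) && (par T v == i) then f i else 1)%R.
  by rewrite -big_mkcond big_const_seq iter_mulr_1.
rewrite (eq_bigr _ (fun i _ => sons_prod i)) exchange_big /parent_prod [RHS]big_mkcond.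
apply: eq_big_seq => v vT /=; case: (eqVneq v (troot T)) => [-> | vr] /=.
  by rewrite big1.
have [pT _] := inc_tree_par T_inc vT vr.
rewrite -big_mkcond -big_filter /= (eq_filter (a2 := pred1 (par T v))).
  by rewrite filter_pred1_uniq ?big_seq1 //; case: T_inc.
by move=> i /=; rewrite eq_sym.
Qed.

Lemma parent_prod_chain (R : comPzSemiRingType) (f : nat -> R) (T : tree) v (s : seq nat) :
  is_inc_tree T -> v \in verts T ->
  {in verts T, forall x, (x \in s) = (x \in chain T v)} ->
  parent_prod f T = (\prod_(x <- chain T v | x != v) f x *
                     \prod_(u <- verts T | u \notin s) f (par T u))%R.
Proof.
move=> T_inc vT s_chain; rewrite /parent_prod (bigID (fun u => u \in s)) /=.
have rs : troot T \in s by rewrite s_chain ?inc_tree_root_mem ?root_mem_chain.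
congr (_ * _)%R; last first.
  by apply: eq_bigl => u; case: (eqVneq u (troot T)) => [-> | _]; rewrite ?rs.
rewrite (eq_bigl (fun u => (u \in s) && (u != troot T))); last by move=> u; rewrite andbC.
rewrite -big_filter_cond -(chain_parent_prod T_inc f vT); apply: perm_big.
apply: uniq_perm; [by apply: filter_uniq; case: T_inc | exact: chain_uniq |].
move=> x; rewrite mem_filter; case xT: (x \in verts T); first by rewrite s_chain ?andbT.
by rewrite andbF; apply/esym/negP => /(mem_chain T_inc vT); rewrite xT.
Qed.

Section Splice.
Variables (T1 T2 : tree) (v1 v2 : nat).
Hypotheses (T1_inc : is_inc_tree T1) (T2_inc : is_inc_tree T2).
Hypotheses (v1T1 : v1 \in verts T1) (v2T2 : v2 \in verts T2).
Hypothesis T12_disj : {in verts T1, forall x, x \notin verts T2}.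

Local Notation S := (spl T1 v1 T2 v2).
Local Notation C := (chain T1 v1 ++ chain T2 v2).

Let chain1_sub x : x \in chain T1 v1 -> x \in verts T1.
Proof. by case/(mem_chain T1_inc v1T1)/andP. Qed.

Let chain2_sub x : x \in chain T2 v2 -> x \in verts T2.
Proof. by case/(mem_chain T2_inc v2T2)/andP. Qed.

Let C_sub : {subset C <= verts S}.
Proof.
by move=> x; rewrite verts_spl !mem_cat => /orP[/chain1_sub | /chain2_sub] ->; rewrite ?orbT.
Qed.

Let C_pos : all (fun w => 0 < w) C.
Proof.
by apply/allP => x; rewrite mem_cat => /orP[/chain1_sub | /chain2_sub]; apply: inc_tree_pos.
Qed.

Let C_uniq : uniq C.
Proof.
rewrite cat_uniq !chain_uniq //= andbT; apply/hasPn => x /chain2_sub xT2.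
by apply/negP => /chain1_sub /T12_disj; rewrite xT2.
Qed.

Let C_chain1 : {in verts T1, forall x, (x \in C) = (x \in chain T1 v1)}.
Proof.
move=> x xT1; rewrite mem_cat; case x2: (x \in chain T2 v2); rewrite ?orbF //.
by move: (T12_disj xT1); rewrite (chain2_sub x2).
Qed.

Let C_chain2 : {in verts T2, forall x, (x \in C) = (x \in chain T2 v2)}.
Proof.
move=> x xT2; rewrite mem_cat; case x1: (x \in chain T1 v1) => //.
by move: (T12_disj (chain1_sub x1)); rewrite xT2.
Qed.

Let par_C : {in C, forall u, par S u = max_below C u}.
Proof. by move=> u uC; rewrite /par /= uC. Qed.

Let par_out1 : {in verts T1, forall u, u \notin C -> par S u = par T1 u}.
Proof. by move=> u uT1 /negbTE uC; rewrite /par /= uC uT1. Qed.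

Let par_out2 : {in verts T2, forall u, u \notin C -> par S u = par T2 u}.
Proof.
move=> u uT2 /negbTE uC; rewrite /par /= uC.
by case uT1: (u \in verts T1) => //; move: (T12_disj uT1); rewrite uT2.
Qed.

Let root_C : troot S \in C.
Proof.
have S_ne : verts S != [::] by rewrite verts_spl; case: T1_inc => _; case: (verts T1).
have rS := root_mem S_ne; move: (rS); rewrite verts_spl mem_cat => /orP[rT | rT].
  have -> : troot S = troot T1.
    by apply/eqP; rewrite eqn_leq root_min ?root_min // verts_spl mem_cat inc_tree_root_mem.
  by rewrite mem_cat root_mem_chain.
have -> : troot S = troot T2.
  by apply/eqP; rewrite eqn_leq root_min ?root_min // verts_spl mem_cat inc_tree_root_mem ?orbT.
by rewrite mem_cat root_mem_chain ?orbT.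
Qed.

Lemma spl_inc : is_inc_tree S.
Proof.
split.
- rewrite verts_spl cat_uniq; case: T1_inc => -> _ _ _; case: T2_inc => -> _ _ _.
  by rewrite andbT /=; apply/hasPn => x xT2; apply: contraL xT2 => /T12_disj.
- by rewrite verts_spl; case: T1_inc => _; case: (verts T1).
- by rewrite verts_spl all_cat; case: T1_inc => _ _ -> _; case: T2_inc => _ _ -> _.
move=> v vS; case vC: (v \in C).
  rewrite par_C //; case: ifP => [/eqP -> | /negbT vr].
    by apply: max_below_eq0 => w /C_sub; apply: root_min.
  have rv : troot S < v by rewrite ltn_neqAle eq_sym vr root_min.
  by have [? ?] := max_below_mem C_pos root_C rv; split => //; apply: C_sub.
rewrite ifN; last by apply: contraFneq vC => ->.
move: vS; rewrite verts_spl mem_cat => /orP[vT | vT].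
  have vr : v != troot T1.
    by apply: contraFneq vC => ->; rewrite C_chain1 ?inc_tree_root_mem ?root_mem_chain.
  have [pT pv] := inc_tree_par T1_inc vT vr.
  by rewrite par_out1 ?vC // mem_cat pT.
have vr : v != troot T2.
  by apply: contraFneq vC => ->; rewrite C_chain2 ?inc_tree_root_mem ?root_mem_chain.
have [pT pv] := inc_tree_par T2_inc vT vr.
by rewrite par_out2 ?vC // mem_cat pT orbT.
Qed.

Lemma chain_spl1 b a : b \in verts T1 -> a \in chain T1 b -> a \in chain S b.
Proof.
apply: (chain_graft T1_inc spl_inc v1T1 _ C_pos par_C C_chain1 par_out1 root_C).
by move=> u uT1; rewrite verts_spl mem_cat uT1.
Qed.

Lemma chain_spl2 b a : b \in verts T2 -> a \in chain T2 b -> a \in chain S b.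
Proof.
apply: (chain_graft T2_inc spl_inc v2T2 _ C_pos par_C C_chain2 par_out2 root_C).
by move=> u uT2; rewrite verts_spl mem_cat uT2 orbT.
Qed.

Lemma parent_prod_spl (R : comPzSemiRingType) (f : nat -> R) : v2 < v1 ->
  parent_prod f S = (f v2 * parent_prod f T1 * parent_prod f T2)%R.
Proof.
move=> v21.
have v1S : v1 \in verts S by rewrite verts_spl mem_cat v1T1.
have chainS : chain S v1 =i C.
  move=> x; rewrite /chain (mem_anc_fuel_max_below C_pos par_C) //; last first.
    by rewrite mem_cat chain_self.
  case xC: (x \in C) => //=; move: xC; rewrite mem_cat.
  case/orP => /[dup] x_ch; [move/(mem_chain T1_inc v1T1) | move/(mem_chain T2_inc v2T2)].
    by case/andP.
  by case/andP => _ /leq_trans; apply; apply: ltnW.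
rewrite (parent_prod_chain f spl_inc v1S (fun x _ => esym (chainS x))).
rewrite (parent_prod_chain f T1_inc v1T1 C_chain1) (parent_prod_chain f T2_inc v2T2 C_chain2).
have -> : (\prod_(u <- verts S | u \notin C) f (par S u) =
    \prod_(u <- verts T1 | u \notin C) f (par T1 u) *
    \prod_(u <- verts T2 | u \notin C) f (par T2 u))%R.
  rewrite verts_spl big_cat; congr (_ * _)%R.
    by rewrite big_seq_cond [RHS]big_seq_cond; apply: eq_bigr => u /andP[uT uC]; rewrite par_out1.
  by rewrite big_seq_cond [RHS]big_seq_cond; apply: eq_bigr => u /andP[uT uC]; rewrite par_out2.
rewrite (perm_big _ (uniq_perm (chain_uniq spl_inc v1S) C_uniq chainS)) big_cat /=.
have -> : (\prod_(x <- chain T2 v2 | x != v1) f x = \prod_(x <- chain T2 v2) f x)%R.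
  rewrite big_seq_cond [RHS]big_seq_cond; apply: eq_bigl => x /=.
  case x_ch: (x \in chain T2 v2) => //=; case/andP: (mem_chain T2_inc v2T2 x_ch) => _ x_le.
  by apply/negP => /eqP x_v1; move: (leq_ltn_trans x_le v21); rewrite x_v1 ltnn.
rewrite (bigD1_seq v2 (chain_self T2_inc v2T2) (chain_uniq T2_inc v2T2)) /=.
by ring.
Qed.

End Splice.

Section ChainTree.
Variable b : seq nat.
Hypotheses (b_uniq : uniq b) (b_pos : all (fun w => 0 < w) b).

Lemma mem_chain_tree y x : y \in b ->
  (x \in chain (chain_tree b) y) = (x \in b) && (x <= y).
Proof. by move=> yb; rewrite /chain (mem_anc_fuel_max_below (s := b)). Qed.

Lemma chain_tree_inc : b != [::] -> is_inc_tree (chain_tree b).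
Proof.
move=> b_ne; split => // v vb; have rb := @root_mem (chain_tree b) b_ne.
case: ifP => [/eqP -> | /negbT vr].
  by apply: max_below_eq0 => w; apply: (@root_min (chain_tree b)).
have rv : troot (chain_tree b) < v by rewrite ltn_neqAle eq_sym vr (@root_min (chain_tree b)).
exact: max_below_mem b_pos rb rv.
Qed.

Lemma parent_prod_chain_tree (R : comPzSemiRingType) (f : nat -> R) m :
  m \in b -> {in b, forall x, x <= m} ->
  (f m * parent_prod f (chain_tree b) = \prod_(x <- b) f x)%R.
Proof.
move=> mb b_le; have b_ne : b != [::] by case: (b) mb.
have b_inc := chain_tree_inc b_ne.
have b_chain : {in verts (chain_tree b), forall x, (x \in b) = (x \in chain (chain_tree b) m)}.
  by move=> x xb; rewrite mem_chain_tree // xb b_le.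
rewrite (parent_prod_chain f b_inc mb b_chain) [X in (_ * (_ * X))%R]big1_seq ?mulr1; last first.
  by move=> u /andP[/negP].
rewrite -(bigD1_seq _ (chain_self b_inc mb) (chain_uniq b_inc mb)).
apply: perm_big; apply: uniq_perm => //; first exact: chain_uniq.
by move=> x; rewrite mem_chain_tree //; case xb: (x \in b) => //=; apply: b_le.
Qed.

End ChainTree.

(** * Forests *)

Lemma big_upd (R : Type) (idx : R) (op : Monoid.com_law idx) (g : tree -> R)
    (L : seq nat) (F : nat -> tree) b t : uniq L -> b \in L ->
  \big[op/idx]_(l <- L) g (upd F b t l) = op (g t) (\big[op/idx]_(l <- L | l != b) g (F l)).
Proof.
move=> L_uniq bL; rewrite (bigD1_seq b bL L_uniq) /upd eqxx; congr (op _ _).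
by apply: eq_bigr => l /negbTE ->.
Qed.

Section Forest.
Variables (r : nat) (P : {set {set 'I_r.+1}}).

(* [forest_count]: every x in {1..r} lies in exactly one tree [F l], and no
   other x lies in any. *)
Record forest (L : seq nat) (F : nat -> tree) : Prop := {
  forest_inc : forall l, l \in L -> is_inc_tree (F l);
  forest_count : forall x, \sum_(l <- L) count_mem x (verts (F l)) = (1 <= x <= r);
  forest_chain : forall B, B \in P -> forall x y : 'I_r.+1, x \in B -> y \in B -> x < y ->
    forall l, l \in L -> (y : nat) \in verts (F l) -> (x : nat) \in chain (F l) y }.

Lemma forest_perm L1 L2 F : perm_eq L1 L2 -> forest L1 F -> forest L2 F.
Proof.
move=> L12 [F_inc F_count F_chain]; split.
- by move=> l; rewrite -(perm_mem L12); apply: F_inc.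
- by move=> x; rewrite -(perm_big _ L12).
- by move=> B BP x y xB yB xy l; rewrite -(perm_mem L12); exact: F_chain BP x y xB yB xy l.
Qed.

Lemma forest_has L F x : forest L F ->
  (1 <= x <= r) = has (fun l => x \in verts (F l)) L.
Proof.
move=> FL; have -> : (1 <= x <= r) = (\sum_(l <- L) count_mem x (verts (F l)) != 0).
  by rewrite forest_count //; case: (1 <= x <= r).
by rewrite sum_nat_seq_neq0; apply: eq_has => l /=; rewrite -lt0n -has_count has_pred1.
Qed.

Lemma forest_disjoint L F a b x : forest L F -> uniq L -> a \in L -> b \in L -> a != b ->
  x \in verts (F a) -> x \notin verts (F b).
Proof.
move=> FL L_uniq aL bL ab xa; apply/negP => xb.
have bLa : b \in [seq l <- L | l != a] by rewrite mem_filter eq_sym ab.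
have ca : 0 < count_mem x (verts (F a)) by rewrite -has_count has_pred1.
have cb : 0 < count_mem x (verts (F b)) by rewrite -has_count has_pred1.
have := leq_b1 (1 <= x <= r); rewrite -(forest_count FL x) (bigD1_seq a aL L_uniq).
rewrite -big_filter (bigD1_seq b bLa (filter_uniq _ L_uniq)) /=.
by move/(leq_trans (leq_add ca (leq_trans cb (leq_addr _ _)))).
Qed.

Section Merge.
Variables (L : seq nat) (a b w v : nat) (F : nat -> tree).
Hypotheses (F_forest : forest (a :: L) F) (aL_uniq : uniq (a :: L)) (bL : b \in L).
Hypotheses (wFa : w \in verts (F a)) (vFb : v \in verts (F b)).

Local Notation t := (spl (F a) w (F b) v).

Let aL : a \in a :: L. Proof. exact: mem_head. Qed.
Let bL' : b \in a :: L. Proof. by rewrite in_cons bL orbT. Qed.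
Let ab : a != b. Proof. by apply: contraTneq aL_uniq => ->; rewrite /= bL. Qed.
Let L_uniq : uniq L. Proof. by case/andP: aL_uniq. Qed.
Let Fa_inc := forest_inc F_forest aL.
Let Fb_inc := forest_inc F_forest bL'.
Let ab_disj : {in verts (F a), forall x, x \notin verts (F b)}.
Proof. by move=> x; apply: forest_disjoint F_forest aL_uniq aL bL' ab. Qed.

Lemma forest_merge : forest L (upd F b t).
Proof.
split.
- move=> l lL; rewrite /upd; case: eqP => _; first exact: spl_inc.
  by apply: (forest_inc F_forest); rewrite in_cons lL orbT.
- move=> x; rewrite (big_upd _ (fun T => count_mem x (verts T)) _ _ L_uniq bL) verts_spl count_cat.
  rewrite -(forest_count F_forest x) big_cons (bigD1_seq b bL L_uniq) /=.
  by rewrite addnA.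
move=> B BP x y xB yB xy l lL; rewrite /upd; case: eqP => [_ | _]; last first.
  by apply: (forest_chain F_forest BP xB yB xy); rewrite in_cons lL orbT.
rewrite verts_spl mem_cat => /orP[ya | yb].
  exact/(chain_spl1 Fa_inc Fb_inc wFa vFb ab_disj ya)/(forest_chain F_forest BP xB yB xy aL).
exact/(chain_spl2 Fa_inc Fb_inc wFa vFb ab_disj yb)/(forest_chain F_forest BP xB yB xy bL').
Qed.

Lemma forest_merge_prod (R : comPzSemiRingType) (f : nat -> R) : v < w ->
  (\prod_(l <- L) parent_prod f (upd F b t l) = f v * \prod_(l <- a :: L) parent_prod f (F l))%R.
Proof.
move=> vw; rewrite (big_upd _ _ _ _ L_uniq bL) (parent_prod_spl Fa_inc Fb_inc wFa vFb ab_disj _ vw).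
by rewrite big_cons (bigD1_seq b bL L_uniq) /=; ring.
Qed.

End Merge.
End Forest.

(** * Blocks of the partition *)

Lemma map_nth_iota_shift (s : seq nat) n : [seq nth 0 s (j - n) | j <- iota n (size s)] = s.
Proof.
rewrite -[n in iota n]addn0 iotaDl -map_comp -[RHS](mkseq_nth 0).
by apply: eq_map => j /=; rewrite addKn.
Qed.

Section Partition.
Variables (r : nat) (P : {set {set 'I_r.+1}}).
Hypothesis P_pi1 : Pi1 P.

Local Notation k := (nbl P).

Definition block_set l := pblock P (inord (mu P l)).

Let P_cover : cover P = posI r.
Proof. by case/andP: P_pi1 => /cover_partition. Qed.
Let P_triv : trivIset P.
Proof. by case/andP: P_pi1 => /and3P[]. Qed.
Let P_set0 : set0 \notin P.
Proof. by case/andP: P_pi1 => /and3P[]. Qed.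
Let P_set1 : [set inord 1] \in P.
Proof. by case/andP: P_pi1. Qed.

Let mem_P_pos B x : B \in P -> x \in B -> 0 < x.
Proof.
move=> BP xB; have : x \in cover P by apply/bigcupP; exists B.
by rewrite P_cover inE.
Qed.

Lemma bmax_mem B : B \in P -> exists2 x, x \in B & (x : nat) = bmax B.
Proof.
move=> BP; have : 0 < #|B| by rewrite card_gt0; apply: contraNneq P_set0 => <-.
by case/(eq_bigmax_cond (fun x : 'I_r.+1 => (x : nat))) => x xB bx; exists x; rewrite // /bmax bx.
Qed.

Lemma leq_bmax (B : {set 'I_r.+1}) (x : 'I_r.+1) : x \in B -> x <= bmax B.
Proof. exact: (leq_bigmax_cond (F := fun x : 'I_r.+1 => (x : nat))). Qed.

Lemma pblock_bmax B : B \in P -> pblock P (inord (bmax B)) = B.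
Proof. by move=> BP; case: (bmax_mem BP) => x xB <-; rewrite inord_val; apply: def_pblock. Qed.

Lemma size_mus : size (mus P) = k.
Proof. by rewrite size_sort size_map -cardE. Qed.

Lemma mus_uniq : uniq (mus P).
Proof.
rewrite sort_uniq map_inj_in_uniq ?enum_uniq // => B1 B2.
by rewrite !mem_enum => B1P B2P eq_bmax; rewrite -(pblock_bmax B1P) eq_bmax pblock_bmax.
Qed.

Lemma mu_mono l l' : 1 <= l -> l < l' -> l' <= k -> mu P l < mu P l'.
Proof.
move=> l1 ll' l'k; have mus_lt : sorted ltn (mus P).
  by rewrite ltn_sorted_uniq_leq mus_uniq sort_sorted //; apply: leq_total.
by apply: (sorted_ltn_nth ltn_trans 0 mus_lt); rewrite ?inE /= ?size_mus; lia.
Qed.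

Lemma block_setP l : 1 <= l <= k -> block_set l \in P /\ bmax (block_set l) = mu P l.
Proof.
move=> lk; have : mu P l \in mus P by rewrite /mu mem_nth // size_mus; lia.
by rewrite /block_set mem_sort => /mapP[B BP ->]; rewrite pblock_bmax // -mem_enum.
Qed.

Lemma block_set_of B : B \in P -> exists2 l, 1 <= l <= k & block_set l = B.
Proof.
move=> BP; have bB : bmax B \in mus P by rewrite mem_sort map_f ?mem_enum.
exists (index (bmax B) (mus P)).+1; first by rewrite /= -size_mus index_mem.
by rewrite /block_set /mu /= nth_index // pblock_bmax.
Qed.

Lemma mem_block l (x : 'I_r.+1) : ((x : nat) \in block P l) = (x \in block_set l).
Proof. by rewrite mem_sort mem_map ?mem_enum //; apply: val_inj. Qed.

Lemma mem_blockP l n : n \in block P l -> exists2 x : 'I_r.+1, x \in block_set l & (x : nat) = n.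
Proof. by rewrite mem_sort => /mapP[x xB ->]; exists x; rewrite // -mem_enum. Qed.

Lemma block_uniq l : uniq (block P l).
Proof. by rewrite sort_uniq map_inj_uniq ?enum_uniq //; apply: val_inj. Qed.

Section Block.
Variable l : nat.
Hypothesis lk : 1 <= l <= k.

Lemma mu_mem_block : mu P l \in block P l.
Proof.
have [BP <-] := block_setP lk; case: (bmax_mem BP) => x xB <-.
by rewrite mem_block.
Qed.

Lemma block_le_mu n : n \in block P l -> n <= mu P l.
Proof. by case/mem_blockP => x xB <-; have [_ <-] := block_setP lk; apply: leq_bmax. Qed.

Lemma block_pos : all (fun n => 0 < n) (block P l).
Proof. by apply/allP => n /mem_blockP[x xB <-]; apply: mem_P_pos (proj1 (block_setP lk)) xB. Qed.

Lemma mu_le_r : mu P l <= r.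
Proof. by have [BP <-] := block_setP lk; case: (bmax_mem BP) => x _ <-; rewrite -ltnS. Qed.

End Block.

Lemma block_disjoint l l' n : 1 <= l <= k -> 1 <= l' <= k -> l != l' ->
  n \in block P l -> n \notin block P l'.
Proof.
move=> lk l'k ll' /mem_blockP[x xB <-]; apply: contra ll'; rewrite mem_block => xB'.
have [BP bB] := block_setP lk; have [B'P bB'] := block_setP l'k.
have : mu P l = mu P l'.
  by rewrite -bB -bB' -(def_pblock P_triv BP xB) -(def_pblock P_triv B'P xB').
rewrite /mu => /eqP; rewrite nth_uniq ?mus_uniq ?size_mus; lia.
Qed.

Lemma block_cover n : 1 <= n <= r -> exists2 l, 1 <= l <= k & n \in block P l.
Proof.
move=> nr; have n_ord : n = (inord n : 'I_r.+1) by rewrite inordK //; lia.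
have n_cov : (inord n : 'I_r.+1) \in cover P by rewrite P_cover inE -n_ord; lia.
have [l lk Bl] := block_set_of (pblock_mem n_cov); exists l => //.
by rewrite n_ord mem_block Bl mem_pblock.
Qed.

Lemma sum_count_blocks n :
  \sum_(l <- iota 1 k) count_mem n (block P l) = (1 <= n <= r).
Proof.
have iota_k l : (l \in iota 1 k) = (1 <= l <= k) by rewrite mem_iota; lia.
case nr: (1 <= n <= r); last first.
  apply: big1_seq => l /andP[_]; rewrite iota_k => lk; apply/count_memPn.
  apply: contraFN nr => nb; have := allP (block_pos lk) _ nb.
  by have := leq_trans (block_le_mu lk nb) (mu_le_r lk); lia.
have [l lk nl] := block_cover nr.
have lL : l \in iota 1 k by rewrite iota_k.
rewrite (bigD1_seq l lL (iota_uniq 1 k)) count_uniq_mem ?block_uniq // nl big1_seq //.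
move=> l' /andP[l'l]; rewrite iota_k => l'k; apply/count_memPn.
by apply: block_disjoint lk l'k _ nl; rewrite eq_sym.
Qed.

Lemma mem_block_same B l (x y : 'I_r.+1) : B \in P -> x \in B -> y \in B ->
  1 <= l <= k -> (y : nat) \in block P l -> (x : nat) \in block P l.
Proof.
move=> BP xB yB lk; rewrite !mem_block => yBl.
by rewrite -(def_pblock P_triv (proj1 (block_setP lk)) yBl) (def_pblock P_triv BP yB).
Qed.

Lemma forest1_in_E l F : forest P [:: l] F -> in_E P (F l).
Proof.
case=> F_inc F_count F_chain; have Fl_inc := F_inc l (mem_head l [::]).
have F_verts x : (x \in verts (F l)) = (1 <= x <= r).
  have := F_count x; rewrite big_seq1 count_uniq_mem; last by case: Fl_inc.
  by case: (x \in verts (F l)); case: (1 <= x <= r).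
split=> // B BP x y xB yB xy; apply: (F_chain B BP x y xB yB xy l (mem_head l [::])).
by rewrite F_verts (mem_P_pos BP yB) leq_ord.
Qed.

Lemma perm_blocks : perm_eq (flatten [seq block P l | l <- iota 1 k]) (iota 1 r).
Proof.
apply/allP => n _ /=; apply/eqP.
rewrite count_flatten sumnE !big_map sum_count_blocks count_uniq_mem ?iota_uniq //.
by rewrite mem_iota add1n ltnS.
Qed.

Lemma prod_blocks (R : comPzSemiRingType) (f : nat -> R) :
  (\prod_(1 <= i < r.+1) f i =
   \prod_(l <- iota 1 k) (f (mu P l) * parent_prod f (chain_tree (block P l))))%R.
Proof.
rewrite /index_iota subn1 -(perm_big _ perm_blocks) big_flatten big_map /=.
apply: eq_big_seq => l; rewrite mem_iota => lk; have lk' : 1 <= l <= k by lia.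
rewrite parent_prod_chain_tree ?block_uniq ?block_pos ?mu_mem_block //.
exact: block_le_mu.
Qed.

Lemma map_mu_iota : [seq mu P l | l <- iota 1 k] = mus P.
Proof.
by rewrite -size_mus -[RHS](map_nth_iota_shift _ 1); apply: eq_map => l; rewrite /mu subn1.
Qed.

Lemma nbl_ge2 : 2 <= r -> 2 <= k.
Proof.
move=> r_ge2.
have two_cov : (inord 2 : 'I_r.+1) \in cover P by rewrite P_cover inE inordK.
have two_ne1 : pblock P (inord 2) != [set inord 1].
  apply/negP => /eqP B2; have := mem_pblock P (inord 2); rewrite two_cov B2 inE.
  by move/eqP/(congr1 val) => /=; rewrite !inordK //; lia.
have sub2 : [set pblock P (inord 2); [set inord 1]] \subset P.
  by apply/subsetP => B; rewrite !inE => /orP[] /eqP ->; rewrite ?pblock_mem.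
by have := subset_leq_card sub2; rewrite cards2 two_ne1.
Qed.

Lemma mus_head : 0 < r -> mus P = 1 :: behead (mus P).
Proof.
move=> r_pos.
have one_mus : 1 \in mus P.
  rewrite mem_sort; apply/mapP; exists [set inord 1]; rewrite ?mem_enum //.
  by rewrite /bmax big_set1 inordK //; lia.
have := sort_sorted leq_total [seq bmax B | B <- enum P]; move: one_mus.
rewrite /mus; case E: (sort _ _) => [|m s] //= one_ms m_path.
have m1 : m <= 1.
  move: one_ms; rewrite in_cons => /orP[/eqP -> // | one_s].
  exact: (allP (order_path_min leq_trans m_path)).
suff : 0 < m by move=> m0; congr (_ :: _); lia.
have : m \in mus P by rewrite /mus E mem_head.
rewrite mem_sort => /mapP[B BP ->]; rewrite mem_enum in BP.
by case: (bmax_mem BP) => x xB <-; apply: mem_P_pos xB.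
Qed.

Lemma mu1 : 0 < r -> mu P 1 = 1.
Proof. by move=> r_pos; rewrite /mu mus_head. Qed.

End Partition.

(** * The construction *)

Lemma head_filter_mem (T : eqType) (p : pred T) (s : seq T) x0 :
  has p s -> head x0 (filter p s) \in filter p s.
Proof. by rewrite has_filter; case: filter => //= x s' _; apply: mem_head. Qed.

Lemma xv_neq0 r i : xv r i != 0%R.
Proof.
rewrite /xv tofrac_eq0; apply/eqP => X0.
have := mcoeffXU rat (inord i : 'I_r.+1) (inord i).
by rewrite X0 mcoeff0 eqxx => /eqP; rewrite eq_sym oner_eq0.
Qed.

Section Construction.
Variables (r : nat) (P : {set {set 'I_r.+1}}) (c : seq nat).
Hypotheses (r_ge2 : 2 <= r) (P_pi1 : Pi1 P) (c_C : in_C P c).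

Local Notation k := (nbl P).
Local Notation f := (xv r).

Let k_ge2 : 2 <= k. Proof. exact: nbl_ge2. Qed.

(* Indices of the trees tau_1, tau_i, ..., tau_k still in play before stage i. *)
Definition active i := 1 :: iota i (k.+1 - i).

Lemma active_uniq i : 2 <= i -> uniq (active i).
Proof. by move=> i2; rewrite /= iota_uniq mem_iota andbT; lia. Qed.

Lemma active_first : active 2 = iota 1 k.
Proof. by rewrite /active; case: k k_ge2 => // n _; rewrite subSS subn1. Qed.

Lemma active_last : active k = [:: 1; k].
Proof. by rewrite /active subSnn. Qed.

Lemma perm_active i : i < k -> perm_eq (active i) (i :: active i.+1).
Proof.
by move=> ik; rewrite /active subSS subSn 1?ltnW //=; apply/permP => p /=; rewrite addnCA.
Qed.

(* The pending factor [f nu] is the edge that the next splice into tau_1 will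
   create, so that stage j contributes exactly [f (cc c j)]. *)
Record invariant (i : nat) (F : nat -> tree) (nu : nat) : Prop := {
  inv_forest : forest P (active i) F;
  inv_mu : forall l, i <= l <= k -> mu P l \in verts (F l);
  inv_nu : nu \in verts (F 1);
  inv_nu_lt : nu < mu P i;
  inv_prod : (\prod_(l <- active i) parent_prod f (F l) * f nu =
              f 1 * \prod_(j <- iota 2 (i - 2)) f (cc c j) *
              \prod_(l <- iota 1 k) parent_prod f (chain_tree (block P l)))%R }.

Lemma invariant_init : invariant 2 (fun l => chain_tree (block P l)) 1.
Proof.
have iota_k l : (l \in iota 1 k) = (1 <= l <= k) by rewrite mem_iota; lia.
split.
- rewrite active_first; split.
  + move=> l; rewrite iota_k => lk; apply: chain_tree_inc (block_uniq _ _) _ _.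
      exact: block_pos.
    by have := mu_mem_block P_pi1 lk; case: (block P l).
  + exact: sum_count_blocks.
  move=> B BP x y xB yB xy l; rewrite iota_k => lk /= yl.
  rewrite mem_chain_tree ?block_uniq ?block_pos ?(ltnW xy) ?andbT //.
  exact: mem_block_same xB yB lk yl.
- by move=> l lk; apply: mu_mem_block; lia.
- by rewrite /= -{1}(mu1 P_pi1 (ltnW r_ge2)); apply: mu_mem_block; lia.
- by rewrite -{1}(mu1 P_pi1 (ltnW r_ge2)); apply: mu_mono; lia.
by rewrite active_first big_nil mulr1 mulrC.
Qed.

Lemma invariant_merge i F nu b v nu' : 2 <= i < k -> invariant i F nu ->
  b \in active i.+1 -> v \in verts (F b) -> v < mu P i ->
  let F' := upd F b (spl (F i) (mu P i) (F b) v) in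
  nu' \in verts (F' 1) -> nu' < mu P i.+1 -> (f v * f nu' = f nu * f (cc c i))%R ->
  invariant i.+1 F' nu'.
Proof.
move=> ik [F_forest F_mu _ _ F_prod] b_act vb v_mu F' nu'F' nu'_lt f_nu'.
have perm_i := perm_active (proj2 (andP ik)).
have F_forest' := forest_perm perm_i F_forest.
have uniq_i : uniq (i :: active i.+1) by rewrite -(perm_uniq perm_i) active_uniq //; lia.
have mu_i : mu P i \in verts (F i) by apply: F_mu; lia.
split => //.
- exact: forest_merge F_forest' uniq_i b_act mu_i vb.
- move=> l lk; rewrite /F' /upd; case: eqP => [lb | _]; last by apply: F_mu; lia.
  by rewrite verts_spl mem_cat -lb F_mu ?orbT //; lia.
rewrite (forest_merge_prod F_forest' uniq_i b_act mu_i vb _ v_mu) -(perm_big _ perm_i).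
have -> : iota 2 (i.+1 - 2) = iota 2 (i - 2) ++ [:: i].
  by case/andP: ik => i2 _; rewrite subSn // -[(i - 2).+1]addn1 iotaD subnKC.
transitivity (\prod_(l <- active i) parent_prod f (F l) * f nu * f (cc c i))%R.
  by rewrite -[RHS]mulrA -f_nu'; ring.
by rewrite F_prod big_cat big_seq1 /=; ring.
Qed.

Lemma invariant_stage i F nu : 2 <= i < k -> invariant i F nu ->
  invariant i.+1 (stage P c (F, nu) i).1 (stage P c (F, nu) i).2.
Proof.
move=> ik inv; have [F_forest F_mu F_nu F_nu_lt _] := inv.
have c_mu : 1 <= cc c i <= mu P i by apply: c_C.2; lia.
have mu_lt : mu P i < mu P i.+1 by apply: mu_mono; lia.
have mu_i : mu P i \in verts (F i) by apply: F_mu; lia.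
rewrite /stage; case: ifP => [c_in | c_out] /=.
  apply: (invariant_merge ik inv _ F_nu F_nu_lt) => //.
    by rewrite /upd eqxx verts_spl mem_cat orbC.
  exact: leq_ltn_trans (proj2 (andP c_mu)) mu_lt.
have c_has : has (fun j => cc c i \in verts (F j)) (iota i.+1 (k - i)).
  have c_r : 1 <= cc c i <= r by rewrite (leq_trans _ (mu_le_r P_pi1 (_ : 1 <= i <= k))); lia.
  case/norP: (negbT c_out) => /negbTE c1 /negbTE ci.
  by move: c_r; rewrite (forest_has _ F_forest) /active subSn /= ?c1 ?ci //; lia.
set j := head 0 _; have := head_filter_mem 0 c_has; rewrite -/j mem_filter.
case/andP=> c_j; rewrite mem_iota => j_range.
have c_lt : cc c i < mu P i.
  by rewrite ltn_neqAle (proj2 (andP c_mu)) andbT; apply: contraFneq c_out => ->; rewrite mu_i orbT.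
apply: (invariant_merge ik inv _ c_j c_lt) => //.
- by rewrite /active subSS in_cons mem_iota; apply/orP; right; lia.
- by rewrite /upd ifN_eq //; lia.
- exact: ltn_trans F_nu_lt mu_lt.
exact: mulrC.
Qed.

Lemma invariant_fold n : n <= k - 2 ->
  let st := foldl (stage P c) ((fun l => chain_tree (block P l)), 1) (iota 2 n) in
  invariant (2 + n) st.1 st.2.
Proof.
elim: n => [_ | n IH n_lt]; first exact: invariant_init.
rewrite -[n.+1]addn1 iotaD cats1 foldl_rcons.
move: (IH (ltnW n_lt)); case: (foldl _ _ _) => F nu inv.
have ik : 2 <= 2 + n < k by lia.
by rewrite addn1 addnS; exact: invariant_stage ik inv.
Qed.

Lemma omega_eq : omega P c =
  (f 1 * \prod_(j <- iota 2 (k - 2)) f (cc c j) *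
   \prod_(l <- iota 1 k) parent_prod f (chain_tree (block P l)))%R.
Proof.
rewrite /omega; have -> : (\prod_(x <- c) f x = \prod_(j <- iota 2 (k - 2)) f (cc c j))%R.
  by rewrite -(proj1 c_C) -[in LHS](map_nth_iota_shift c 2) big_map.
rewrite (prod_blocks P_pi1) big_split /=.
have -> : (\prod_(l <- iota 1 k) f (mu P l) = \prod_(m <- mus P) f m)%R.
  by rewrite -map_mu_iota big_map.
rewrite (mus_head P_pi1 (ltnW r_ge2)) big_cons /=.
have mus_neq0 : (\prod_(m <- behead (mus P)) f m != 0)%R.
  by rewrite prodf_seq_neq0; apply/allP => m _; apply: xv_neq0.
set A := (\prod_(j <- iota 2 _) _)%R; set B := (\prod_(m <- behead _) _)%R.
set C := (\prod_(l <- iota 1 k) _)%R.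
by rewrite -[(f 1 * B * C)%R]mulrA [(f 1 * (B * C))%R]mulrCA -mulrA mulKf // mulrCA mulrA.
Qed.

End Construction.

Theorem proposition2p7 (r : nat) (P : {set {set 'I_r.+1}}) (c : seq nat) :
  2 <= r -> Pi1 P -> in_C P c ->
  in_E P (psi P c) /\ kappa r (psi P c) = omega P c.
Proof.
move=> r_ge2 P_pi1 c_C; have k_ge2 := nbl_ge2 P_pi1 r_ge2.
have := invariant_fold r_ge2 P_pi1 c_C (leqnn (nbl P - 2)); rewrite subnKC // /psi.
set st := foldl _ _ _ => -[F_forest F_mu F_nu F_nu_lt F_prod].
rewrite active_last in F_forest F_prod.
have last_forest : forest P [:: nbl P; 1] st.1.
  by apply: forest_perm F_forest; apply/permP => p /=; rewrite addnCA.
have last_uniq : uniq [:: nbl P; 1] by rewrite /= inE; lia.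
have mu_k : mu P (nbl P) \in verts (st.1 (nbl P)) by apply: F_mu; lia.
have psi_forest := forest_merge last_forest last_uniq (mem_head 1 [::]) mu_k F_nu.
have psi_inc := forest_inc psi_forest (mem_head 1 [::]); rewrite /upd eqxx in psi_inc.
split; first by have := forest1_in_E P_pi1 psi_forest; rewrite /upd eqxx.
rewrite /kappa prod_pow_sons // (omega_eq r_ge2 P_pi1 c_C) -F_prod !big_cons big_nil.
have := forest_merge_prod last_forest last_uniq (mem_head 1 [::]) mu_k F_nu (xv r) F_nu_lt.
by rewrite big_seq1 /upd eqxx !big_cons big_nil => ->; ring.
Qed.
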